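(* Let $0\le m\le r\le n$. Every $L\in\mathcal L_{r,m}$ can be written uniquely as $L=\sum_{j=0}^r p_j(x)K_{rj}$ with $p_j\in\mathcal P_{r-m}$, and conversely every such sum lies in $\mathcal L_{r,m}$; i.e. $\mathcal L_{r,m}=\mathcal P_{r-m}\otimes\mathcal L_{r,r}$. Hence $\dim\mathcal L_{r,m}=(r+1)(r-m+1)$; in particular the space of operators of order at most $r$ mapping $\mathcal P_n$ into itself has dimension $(r+1)^2$.
   Context: $D=d/dx$. For $s\ge0$, $\mathcal P_s$ is the space of real polynomials in $x$ of degree at most $s$, and $\mathcal P_s=\{0\}$ for $s<0$. For $0\le m\le r$, $\mathcal L_{r,m}$ denotes the real vector space of linear differential operators $L=\sum_{i=0}^r a_i(x)D^i$ with $a_i\in\mathbb R[x]$ (order at most $r$) such that $L(\mathcal P_n)\subset\mathcal P_{n-m}$ (deficiency at least $m$ relative to $\mathcal P_n$). Pochhammer operator: $(a-xD)_k=(-1)^k(xD-a)(xD-(a-1))\cdots(xD-(a-k+1))$. $K_{rj}=\frac{1}{(r-j)!}(n-j-xD)_{r-j}D^j$. *)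

(* Differential operators with polynomial coefficients are
   represented in normal-ordered form  L = sum_i a_i(x) D^i  as elements of
   {poly {poly R}}: the outer variable is the formal D, the coefficient of
   'X^i is a_i. *)
From HB Require Import structures.
From mathcomp Require Import all_boot all_order all_algebra.
From mathcomp Require Import reals.
Set Implicit Arguments. Unset Strict Implicit. Unset Printing Implicit Defensive.
Import Order.TTheory GRing.Theory Num.Theory.
Local Open Scope ring_scope.

Section Ops.
Variable R : fieldType.

Definition inP (s : nat) (f : {poly R}) : bool := (size f <= s.+1)%N.

Definition act (L : {poly {poly R}}) (f : {poly R}) : {poly R} :=
  \sum_(i < size L) L`_i * f^`(i).

(* composition of differential operators (Leibniz rule):
   (a D^i)(b D^k) = sum_l C(i,l) a b^(l) D^(i-l+k) *)
Definition opmul (A B : {poly {poly R}}) : {poly {poly R}} :=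
  \sum_(i < size A) \sum_(k < size B) \sum_(l < i.+1)
     (('C(i, l))%:R * A`_i * (B`_k)^`(l)) *: 'X^(i - l + k).

Definition opD : {poly {poly R}} := 'X.
(* the operator x D *)
Definition opxD : {poly {poly R}} := ('X : {poly R}) *: 'X.

(* Pochhammer operator (a - xD)_k = prod_{i<k} (a - i - xD) *)
Fixpoint poch (a : R) (k : nat) : {poly {poly R}} :=
  match k with
  | 0 => 1
  | k'.+1 => opmul (poch a k') ((a - k'%:R)%:P%:P - opxD)
  end.

(* K_{rj} = 1/(r-j)! (n - j - xD)_{r-j} D^j *)
Definition Kop (r n j : nat) : {poly {poly R}} :=
  ((r - j)`!%:R^-1)%:P *: opmul (poch (n%:R - j%:R) (r - j)) (opD ^+ j).

(* L in L_{r,m} (relative to P_n): order at most r and L(P_n) in P_{n-m} *)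
Definition inL (r m n : nat) (L : {poly {poly R}}) : Prop :=
  (size L <= r.+1)%N /\ forall f, inP n f -> inP (n - m) (act L f).

(* the subspace S (of real-linear operators) has dimension d:
   it has a basis of d elements (over the real scalars) *)
Definition hasDim (S : {poly {poly R}} -> Prop) (d : nat) : Prop :=
  exists b : 'I_d -> {poly {poly R}},
    [/\ forall k, S (b k),
        (forall c : 'I_d -> R, \sum_k (c k)%:P *: b k = 0 -> forall k, c k = 0) &
        (forall L, S L -> exists c : 'I_d -> R, L = \sum_k (c k)%:P *: b k)].

End Ops.

From HB Require Import structures.
From mathcomp Require Import all_boot all_order all_algebra.
From mathcomp Require Import reals.
From mathcomp Require Import ring zify.
Import Order.TTheory GRing.Theory Num.Theory.
Local Open Scope ring_scope.
Set Implicit Arguments. Unset Strict Implicit. Unset Printing Implicit Defensive.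

(* An operator of order at most r is determined by its values on 1, x, ..., x^r.
   Since K_{rj} x^k = c_{jk} x^(k-j), where for k <= n the scalar c_{jk} is nonzero
   exactly when j <= k <= n - r + j, matching these values is a triangular system with
   invertible diagonal c_{kk}: every L of order at most r is sum_j p_j K_{rj} for unique
   polynomials p_j.  Applied to x^(n-r+j), such an L only involves the K_{rt} with t >= j,
   K_{rj} contributing a nonzero multiple of p_j x^(n-r); so by downward induction on j,
   L(P_n) in P_(n-m) forces deg p_j <= r - m.  Conversely p_j K_{rj} sends x^k, k <= n,
   to degree at most deg p_j + n - r.  The x^i K_{rj} (i <= r - m) then form a basis of
   L_{r,m}. *)

Lemma size_sum_leq (S : nzSemiRingType) (I : finType) (P : pred I)
    (F : I -> {poly S}) N :
  (forall i, P i -> (size (F i) <= N)%N) -> (size (\sum_(i | P i) F i)%R <= N)%N.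
Proof. by move=> hF; rewrite (leq_trans (size_sum _ _ _)) //; apply/bigmax_leqP. Qed.

Lemma size_mulXn_leq (S : nzSemiRingType) (p : {poly S}) e :
  (size (p * 'X^e)%R <= size p + e)%N.
Proof. by rewrite (leq_trans (size_polyMleq _ _)) // size_polyXn addnS. Qed.

Lemma derivnM (S : comNzRingType) (p q : {poly S}) i :
  (p * q)^`(i) = \sum_(l < i.+1) (p^`(l) * q^`(i - l)) *+ 'C(i, l).
Proof.
elim: i => [|i IH]; first by rewrite big_ord1 bin0 mulr1n.
rewrite derivnS IH raddf_sum /=.
under eq_bigr => l _ do rewrite derivMn derivM mulrnDl -!derivnS.
rewrite big_split /= [in RHS]big_ord_recl subn0 bin0 mulr1n.
under [in RHS]eq_bigr => l _ do rewrite lift0 subSS binS mulrnDr.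
rewrite big_split /= addrC [in RHS]addrA; congr (_ + _).
rewrite big_ord_recl /= subn0 bin0 mulr1n; congr (_ + _).
rewrite [in RHS]big_ord_recr /= bin_small // mulr0n addr0.
apply: eq_bigr => l _ /=.
by rewrite /bump leq0n add0n add1n -[(q^`(i - l.+1))^`()]derivnS subnSK.
Qed.

Lemma derivn_derivn (S : nzRingType) (p : {poly S}) a k : p^`(k)^`(a) = p^`(a + k).
Proof. by rewrite /derivn iterD. Qed.

Section Action.
Variable R : fieldType.
Implicit Types (L A B : {poly {poly R}}) (f g : {poly R}).

Lemma actE L f N : (size L <= N)%N -> act L f = \sum_(i < N) L`_i * f^`(i).
Proof.
move=> hN; rewrite /act (big_ord_widen N (fun i => L`_i * f^`(i)) hN) big_mkcond /=.
apply: eq_bigr => i _; case: ifP => // /negbT; rewrite -leqNgt => h.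
by rewrite nth_default ?mul0r.
Qed.

Lemma act0 f : act 0 f = 0.
Proof. by rewrite /act size_poly0 big_ord0. Qed.

Lemma actD A B f : act (A + B) f = act A f + act B f.
Proof.
set N := maxn (size A) (size B).
rewrite !(@actE _ _ N) ?leq_maxl ?leq_maxr ?(leq_trans (size_polyD _ _)) //.
by rewrite -big_split; apply: eq_bigr => i _; rewrite coefD mulrDl.
Qed.

Lemma actZ p A f : act (p *: A) f = p * act A f.
Proof.
rewrite !(@actE _ _ (size A)) ?size_scale_leq // mulr_sumr.
by apply: eq_bigr => i _; rewrite coefZ mulrA.
Qed.

Lemma actB A B f : act (A - B) f = act A f - act B f.
Proof. by rewrite actD -scaleN1r actZ mulN1r. Qed.

Lemma act_sum (I : Type) (s : seq I) (P : pred I) (F : I -> {poly {poly R}}) f :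
  act (\sum_(i <- s | P i) F i) f = \sum_(i <- s | P i) act (F i) f.
Proof. exact: (big_morph (fun L => act L f) (fun A B => actD A B f) (act0 f)). Qed.

Lemma actXn e f : act 'X^e f = f^`(e).
Proof.
rewrite (@actE _ _ e.+1) ?size_polyXn // big_ord_recr /= coefXn eqxx mul1r.
by rewrite big1 ?add0r // => i _; rewrite coefXn (ltn_eqF (ltn_ord i)) mul0r.
Qed.

Lemma actC p f : act p%:P f = p * f.
Proof. by rewrite (@actE _ _ 1) ?size_polyC ?leq_b1 // big_ord1 coefC. Qed.

Lemma act_opxD f : act (opxD R) f = 'X * f^`().
Proof. by rewrite /opxD actZ (actXn 1) derivn1. Qed.

Lemma act_linear L : linear (act L).
Proof.
move=> c f g; rewrite /act scaler_sumr -big_split; apply: eq_bigr => i _ /=.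
by rewrite derivnD derivnZ mulrDr scalerAr.
Qed.

HB.instance Definition _ L :=
  GRing.isLinear.Build R {poly R} {poly R} *:%R (act L) (act_linear L).

Lemma act_opmul A B f : act (opmul A B) f = act A (act B f).
Proof.
rewrite /opmul act_sum [RHS]/act; apply: eq_bigr => i _.
rewrite act_sum [act B f]/act raddf_sum /= mulr_sumr; apply: eq_bigr => k _.
rewrite act_sum derivnM mulr_sumr; apply: eq_bigr => l _.
by rewrite actZ actXn derivn_derivn; ring.
Qed.

Lemma act_poch (a : R) k s :
  act (poch a k) 'X^s = (\prod_(i < k) (a - i%:R - s%:R)) *: 'X^s.
Proof.
elim: k => [|k IH]; first by rewrite /= -polyC1 actC mul1r big_ord0 scale1r.
have xD_Xn : 'X * ('X^s)^`() = s%:R *: 'X^s :> {poly R}.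
  case: (s) => [|s']; first by rewrite derivXn !mulr0n mulr0 scale0r.
  by rewrite derivXn mulrnAr -exprS scaler_nat.
rewrite /= act_opmul actB actC act_opxD xD_Xn mul_polyC -scalerBl linearZ /= IH.
by rewrite scalerA big_ord_recr /= mulrC.
Qed.

Lemma size_opmul A B : (size (opmul A B) <= (size A + size B).-1)%N.
Proof.
apply: size_sum_leq => i _; apply: size_sum_leq => k _; apply: size_sum_leq => l _.
rewrite (leq_trans (size_scale_leq _ _)) // size_polyXn.
by have := ltn_ord i; have := ltn_ord k; have := ltn_ord l; lia.
Qed.

Lemma size_poch (a : R) k : (size (poch a k) <= k.+1)%N.
Proof.
elim: k => [|k IH] /=; first by rewrite size_poly1.
rewrite (leq_trans (size_opmul _ _)) //.
have size_factor : (size ((a - k%:R)%:P%:P - opxD R)%R <= 2)%N.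
  rewrite (leq_trans (size_polyD _ _)) // geq_max size_polyN.
  rewrite (leq_trans (size_polyC_leq1 _)) //= /opxD.
  by rewrite (leq_trans (size_scale_leq _ _)) // size_polyX.
by rewrite -subn1 leq_subLR add1n (leq_trans (leq_add IH size_factor)) // addn2.
Qed.

Lemma size_Kop r n j : (j <= r)%N -> (size (Kop R r n j) <= r.+1)%N.
Proof.
move=> le_jr; rewrite /Kop (leq_trans (size_scale_leq _ _)) //.
rewrite (leq_trans (size_opmul _ _)) // /opD size_polyXn.
by have := size_poch (n%:R - j%:R) (r - j); lia.
Qed.

Lemma inL_act_Xn r m n L : (size L <= r.+1)%N ->
  (forall k, (k <= n)%N -> (size (act L 'X^k) <= (n - m).+1)%N) -> inL r m n L.
Proof.
move=> szL szLXn; split=> // f szf.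
rewrite -[f]coefK poly_def linear_sum /=; apply: size_sum_leq => k _.
rewrite linearZ /= (leq_trans (size_scale_leq _ _)) // szLXn //.
by rewrite -ltnS (leq_trans (ltn_ord k)).
Qed.

End Action.

Section Basis.
Variable R : numFieldType.
Variables r n : nat.
Hypothesis le_rn : (r <= n)%N.
Implicit Types (L : {poly {poly R}}) (P Q : 'I_r.+1 -> {poly R}).

Lemma act_Xn_eq0 L :
  (size L <= r.+1)%N -> (forall k, (k <= r)%N -> act L 'X^k = 0) -> L = 0.
Proof.
move=> szL actL0; apply/polyP => i; rewrite coef0.
have [le_ir|lt_ri] := leqP i r; last by rewrite nth_default // (leq_trans szL).
elim/ltn_ind: i le_ir => i IH le_ir.
have := actL0 i le_ir; rewrite (actE _ szL) (bigD1 (Ordinal (le_ir : (i < r.+1)%N))) //=.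
rewrite big1 => [|t /eqP ne_ti].
  rewrite addr0 derivnXn subnn expr0 ffactnn mulrnAr mulr1 => /eqP.
  by rewrite -scaler_nat scale_poly_eq0 pnatr_eq0 eqn0Ngt fact_gt0 => /eqP.
case: (ltngtP t i) => [lt_ti|lt_it|eq_ti].
- by rewrite IH ?mul0r // (leq_trans (ltnW lt_ti)).
- by rewrite derivnXn ffact_small // mulr0n mulr0.
- by case: ne_ti; apply: val_inj.
Qed.

Definition Kcoef (j k : nat) : R :=
  (r - j)`!%:R^-1 * (\prod_(i < r - j) (n%:R - j%:R - i%:R - (k - j)%:R)) * (k ^_ j)%:R.

Lemma act_Kop j k : act (Kop R r n j) 'X^k = Kcoef j k *: 'X^(k - j).
Proof.
rewrite /Kop actZ act_opmul /opD actXn derivnXn -scaler_nat linearZ /= act_poch.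
by rewrite !scalerA mul_polyC scalerA /Kcoef; congr (_ *: _); ring.
Qed.

Lemma Kcoef_lt j k : (k < j)%N -> Kcoef j k = 0.
Proof. by move=> lt_kj; rewrite /Kcoef ffact_small // mulr0. Qed.

Lemma Kcoef_gt j k : (j <= k <= n)%N -> (n - r + j < k)%N -> Kcoef j k = 0.
Proof.
move=> /andP[le_jk le_kn] lt_k; rewrite /Kcoef.
have lt_nk : (n - k < r - j)%N by lia.
have -> : n%:R = j%:R + (n - k)%:R + (k - j)%:R :> R.
  by rewrite -!natrD; congr _%:R; lia.
by rewrite (bigD1 (Ordinal lt_nk)) //= [X in X * _ = 0]mulrC; ring.
Qed.

Lemma Kcoef_neq0 j k : (j <= k <= n - r + j)%N -> Kcoef j k != 0.
Proof.
move=> /andP[le_jk le_k]; rewrite /Kcoef !mulf_neq0 //.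
- by rewrite invr_eq0 pnatr_eq0 -lt0n fact_gt0.
- apply/prodf_neq0 => i _; have := ltn_ord i => lt_i.
  have -> : n%:R = j%:R + i%:R + (k - j)%:R + (n - k - i)%:R :> R.
    by rewrite -!natrD; congr _%:R; lia.
  have -> : j%:R + i%:R + (k - j)%:R + (n - k - i)%:R - j%:R - i%:R - (k - j)%:R
    = (n - k - i)%:R :> R by ring.
  by rewrite pnatr_eq0; lia.
- by rewrite pnatr_eq0 -lt0n ffact_gt0.
Qed.

Definition Kcomb P := \sum_(j < r.+1) P j *: Kop R r n j.

Lemma act_Kcomb P k :
  act (Kcomb P) 'X^k = \sum_(j < r.+1) Kcoef j k *: (P j * 'X^(k - j)).
Proof. by rewrite act_sum; apply: eq_bigr => j _; rewrite actZ act_Kop scalerAr. Qed.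

Lemma size_Kcomb P : (size (Kcomb P) <= r.+1)%N.
Proof.
apply: size_sum_leq => j _; rewrite (leq_trans (size_scale_leq _ _)) //.
by apply: size_Kop; rewrite -ltnS.
Qed.

Lemma KcombB P Q : Kcomb (P \- Q) = Kcomb P - Kcomb Q.
Proof. by rewrite /Kcomb -sumrB; apply: eq_bigr => j _; rewrite scalerBl. Qed.

Lemma Kcomb_eq0 P : Kcomb P = 0 -> forall j, P j = 0.
Proof.
move=> KP0 j; elim/ltn_ind: {j}(val j) {-2}j (erefl (val j)) => i IH j eq_ji.
have := congr1 (fun L => act L 'X^i) KP0; rewrite act0 act_Kcomb (bigD1 j) //= big1.
  rewrite addr0 -eq_ji subnn expr0 mulr1 => /eqP.
  by rewrite scale_poly_eq0 (negbTE (Kcoef_neq0 _)) ?leqnn ?leq_addl // => /eqP.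
move=> t /eqP ne_tj; case: (ltngtP t i) => [lt_ti|lt_it|eq_ti].
- by rewrite (IH t) ?mul0r ?scaler0 // -eq_ji.
- by rewrite Kcoef_lt // scale0r.
- by case: ne_tj; apply: val_inj; rewrite /= eq_ti.
Qed.

Lemma Kcomb_inj P Q : Kcomb P = Kcomb Q -> P =1 Q.
Proof.
move=> eqPQ j; apply/eqP; rewrite -subr_eq0; apply/eqP.
by apply: (@Kcomb_eq0 (P \- Q)); rewrite KcombB eqPQ subrr.
Qed.

Lemma Kcomb_shift P (i : 'I_r.+1) d :
  Kcomb (fun j => P j + (j == i)%:R * d) = Kcomb P + d *: Kop R r n i.
Proof.
rewrite /Kcomb (bigD1 i) // [in RHS](bigD1 i) //= eqxx mul1r scalerDl.
under eq_bigr => j /negbTE -> do rewrite mul0r addr0.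
by rewrite addrAC.
Qed.

Lemma Kcomb_surj L : (size L <= r.+1)%N -> exists P, L = Kcomb P.
Proof.
move=> szL.
have partial i : (i <= r.+1)%N ->
    exists P, forall k, (k < i)%N -> act (Kcomb P) 'X^k = act L 'X^k.
  elim: i => [_|i IH lt_ir]; first by exists (fun=> 0).
  have [P actP] := IH (ltnW lt_ir); set i' := Ordinal lt_ir.
  pose d := (Kcoef i i)^-1 *: (act L 'X^i - act (Kcomb P) 'X^i).
  exists (fun j => P j + (j == i')%:R * d) => k lt_ki.
  rewrite Kcomb_shift actD actZ act_Kop.
  move: lt_ki; rewrite ltnS leq_eqVlt => /orP[/eqP->|lt_ki]; last first.
    by rewrite Kcoef_lt // scale0r mulr0 addr0 actP.
  rewrite subnn expr0 -mul_polyC mulr1 mulrC /d -mul_polyC mulrA -polyCM.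
  by rewrite mulfV ?Kcoef_neq0 ?leqnn ?leq_addl // mul1r addrC subrK.
have [P actP] := partial _ (leqnn r.+1).
exists P; apply/eqP; rewrite -subr_eq0; apply/eqP/act_Xn_eq0 => [|k le_kr].
  by rewrite (leq_trans (size_polyD _ _)) // size_polyN geq_max szL size_Kcomb.
by rewrite actB actP ?subrr.
Qed.

Section Deficiency.
Variable m : nat.
Hypothesis le_mr : (m <= r)%N.

Lemma size_act_Kcomb P : (forall j, (size (P j) <= (r - m).+1)%N) ->
  forall k, (k <= n)%N -> (size (act (Kcomb P) 'X^k) <= (n - m).+1)%N.
Proof.
move=> szP k le_kn; rewrite act_Kcomb; apply: size_sum_leq => j _.
have [lt_kj|le_jk] := ltnP k j; first by rewrite Kcoef_lt // scale0r size_poly0.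
have [lt_k|le_k] := ltnP (n - r + j) k.
  by rewrite Kcoef_gt ?le_jk // scale0r size_poly0.
rewrite (leq_trans (size_scale_leq _ _)) // (leq_trans (size_mulXn_leq _ _)) //.
by rewrite (leq_trans (leq_add (szP j) (leqnn _))) //; lia.
Qed.

Lemma size_Kcomb_coef_step P (j : 'I_r.+1) :
  (size (act (Kcomb P) 'X^(n - r + j)) <= (n - m).+1)%N ->
  (forall t : 'I_r.+1, (j < t)%N -> (size (P t) <= (r - m).+1)%N) ->
  (size (P j) <= (r - m).+1)%N.
Proof.
move=> szLX szPt; have le_jr : (j <= r)%N by rewrite -ltnS.
move: szLX; rewrite act_Kcomb (bigD1 j) //= addnK.
set S := \sum_(t | t != j) _ => szLX.
have szS : (size S <= n - m)%N.
  apply: size_sum_leq => t /eqP ne_tj; case: (ltngtP t j) => [lt_tj|lt_jt|eq_tj].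
  - by rewrite Kcoef_gt ?scale0r ?size_poly0 // ?ltn_add2l ?leq_addl //=; lia.
  - have [lt_kt|le_tk] := ltnP (n - r + j) t.
      by rewrite Kcoef_lt // scale0r size_poly0.
    rewrite (leq_trans (size_scale_leq _ _)) // (leq_trans (size_mulXn_leq _ _)) //.
    by rewrite (leq_trans (leq_add (szPt t lt_jt) (leqnn _))) //; lia.
  - by case: ne_tj; apply: val_inj.
have [->|nzPj] := eqVneq (P j) 0; first by rewrite size_poly0.
set Tj := Kcoef j _ *: _ in szLX.
have : (size Tj <= (n - m).+1)%N.
  rewrite -(addrK S Tj) (leq_trans (size_polyD _ _)) // size_polyN.
  by rewrite geq_max szLX (leq_trans szS).
rewrite size_scale ?Kcoef_neq0 ?leq_addl ?leqnn // size_mulXn // => le_Tj.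
by rewrite -(leq_add2l (n - r)) (leq_trans le_Tj) //; lia.
Qed.

Lemma size_Kcomb_coef P :
  (forall k, (k <= n)%N -> (size (act (Kcomb P) 'X^k) <= (n - m).+1)%N) ->
  forall j, (size (P j) <= (r - m).+1)%N.
Proof.
move=> szLX j; have le_Xn (i : 'I_r.+1) : (n - r + i <= n)%N by have := ltn_ord i; lia.
elim: (r - j)%N {-2}j (leqnn (r - j)) => [|d IH] {}j le_d;
  apply: size_Kcomb_coef_step (szLX _ (le_Xn j)) _ => t lt_jt.
  by have := ltn_ord t; lia.
by apply: IH; lia.
Qed.

Lemma inL_Kcomb P : inL r m n (Kcomb P) <-> forall j, inP (r - m) (P j).
Proof.
split=> [[_ KP] j|szP].
  by apply: size_Kcomb_coef => k le_kn; apply: KP; rewrite /inP size_polyXn.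
exact: inL_act_Xn (size_Kcomb P) (size_act_Kcomb szP).
Qed.

End Deficiency.
End Basis.

Lemma coef_sum_ordXn (S : nzRingType) N (c : 'I_N -> S) (j : 'I_N) :
  (\sum_(i < N) c i *: 'X^i)`_j = c j.
Proof.
rewrite coef_sum (bigD1 j) //= coefZ coefXn eqxx mulr1 big1 ?addr0 // => i ne_ij.
by rewrite coefZ coefXn val_eqE eq_sym (negbTE ne_ij) mulr0.
Qed.

Section Dimension.
Variable R : numFieldType.
Variables r m n : nat.
Hypotheses (le_mr : (m <= r)%N) (le_rn : (r <= n)%N).
Let s := (r - m).+1.

Definition Kbasis_index (k : 'I_(r.+1 * s)) : 'I_r.+1 * 'I_s :=
  enum_val (cast_ord (esym (mxvec_cast r.+1 s)) k).

Lemma Kbasis_indexK i j : Kbasis_index (mxvec_index i j) = (i, j).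
Proof. by rewrite /Kbasis_index cast_ordK enum_rankK. Qed.

Definition Kbasis (k : 'I_(r.+1 * s)) : {poly {poly R}} :=
  'X^((Kbasis_index k).2) *: Kop R r n (Kbasis_index k).1.

Lemma Kbasis_comb (c : 'I_(r.+1 * s) -> R) :
  \sum_k (c k)%:P *: Kbasis k
    = Kcomb n (fun i => \sum_(j < s) c (mxvec_index i j) *: 'X^j).
Proof.
rewrite (reindex _ (curry_mxvec_bij _ _)) /= /Kcomb.
under [RHS]eq_bigr => i _ do rewrite scaler_suml.
rewrite pair_bigA; apply: eq_bigr => -[i j] _ /=.
by rewrite /Kbasis Kbasis_indexK scalerA mul_polyC.
Qed.

Lemma hasDim_inL : hasDim (@inL R r m n) (r.+1 * s).
Proof.
exists Kbasis; split.
- case/mxvec_indexP=> i j; pose P t := (t == i)%:R * 'X^j : {poly R}.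
  have -> : Kbasis (mxvec_index i j) = Kcomb n P.
    rewrite /Kcomb (bigD1 i) //= big1 => [|t /negbTE ne_ti]; last first.
      by rewrite /P ne_ti mul0r scale0r.
    by rewrite /Kbasis Kbasis_indexK /P eqxx mul1r addr0.
  apply/(inL_Kcomb le_rn le_mr) => t; rewrite /inP /P.
  by case: (t == i); rewrite ?mul1r ?size_polyXn ?mul0r ?size_poly0.
- move=> c; rewrite Kbasis_comb => /(Kcomb_eq0 le_rn) c0.
  case/mxvec_indexP=> i j.
  by have := congr1 (coefp j) (c0 i); rewrite /= coef_sum_ordXn coef0.
- move=> L inL_L; have [P eqLP] := Kcomb_surj le_rn inL_L.1.
  move: inL_L; rewrite eqLP => /(inL_Kcomb le_rn le_mr) szP.
  exists (fun k => (P (Kbasis_index k).1)`_(Kbasis_index k).2).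
  rewrite Kbasis_comb /Kcomb; apply: eq_bigr => i _; congr (_ *: _).
  under eq_bigr => j _ do rewrite Kbasis_indexK /=.
  by rewrite -poly_def; apply/esym/take_poly_id/szP.
Qed.
End Dimension.

Theorem mainTheorem18 (R : realType) (m r n : nat) :
  (m <= r)%N -> (r <= n)%N ->
  [/\ (forall L : {poly {poly R}}, inL r m n L ->
         exists! p : {ffun 'I_r.+1 -> {poly R}},
           (forall j, inP (r - m) (p j)) /\ L = \sum_(j < r.+1) p j *: Kop R r n j),
      (forall p : 'I_r.+1 -> {poly R}, (forall j, inP (r - m) (p j)) ->
         inL r m n (\sum_(j < r.+1) p j *: Kop R r n j)),
      hasDim (@inL R r m n) (r.+1 * (r - m).+1) &
      hasDim (@inL R r 0 n) (r.+1 ^ 2)].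
Proof.
move=> le_mr le_rn; split.
- move=> L inL_L; have [P eqLP] := Kcomb_surj le_rn inL_L.1.
  have szP : forall j, inP (r - m) (P j).
    by apply/(inL_Kcomb le_rn le_mr); rewrite -eqLP.
  exists [ffun j => P j]; split.
    split=> [j|]; first by rewrite ffunE.
    by rewrite eqLP; apply: eq_bigr => j _; rewrite ffunE.
  move=> q [_ eqLq]; apply/ffunP => j; rewrite ffunE.
  by apply: (Kcomb_inj le_rn); rewrite -eqLP.
- by move=> p szp; apply/(inL_Kcomb le_rn le_mr).
- exact: hasDim_inL.
- by have := hasDim_inL R (leq0n r) le_rn; rewrite subn0 mulnn.
Qed.
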